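(* Let $R$ be a commutative Noetherian ring and $\phi\colon\mathbb{Z}\to\mathsf{P}(\operatorname{Spec}(R))$ an sp-filtration satisfying the weak Cousin condition. Then there exists an integer $j_0$ such that $\phi(j)=\phi(j_0)$ for all $j\le j_0$, and the subset $\phi(j_0)\subset\operatorname{Spec}(R)$ is open and closed. Also, the set $\bigcap_{i\in\mathbb{Z}}\phi(i)$ is open and closed.
   Context: An sp-filtration is a decreasing map $\phi\colon\mathbb{Z}\to\mathsf{P}(\operatorname{Spec}(R))$ (i.e. $\phi(i)\supset\phi(i+1)$) whose values are subsets stable under specialization. $\phi$ satisfies the weak Cousin condition if for every $j\in\mathbb{Z}$ and primes ${\mathfrak p}\subsetneq{\mathfrak q}$ with no prime strictly between them, ${\mathfrak q}\in\phi(j)$ implies ${\mathfrak p}\in\phi(j-1)$. Topology on $\operatorname{Spec}(R)$ is the Zariski topology. *)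

From HB Require Import structures.
From mathcomp Require Import all_boot all_order all_algebra.
From mathcomp Require Import classical_sets.
Set Implicit Arguments. Unset Strict Implicit. Unset Printing Implicit Defensive.
Import GRing.Theory Num.Theory.
Local Open Scope ring_scope.
Local Open Scope classical_set_scope.

Definition is_ideal (R : comPzRingType) (I : set R) : Prop :=
  I 0 /\ (forall a b, I a -> I b -> I (a + b)) /\ (forall r a, I a -> I (r * a)).

Definition is_prime_ideal (R : comPzRingType) (P : set R) : Prop :=
  is_ideal P /\ ~ P 1 /\ (forall a b, P (a * b) -> P a \/ P b).

Definition noetherian (R : comPzRingType) : Prop :=
  forall I : nat -> set R, (forall n, is_ideal (I n)) ->
    (forall n, I n `<=` I n.+1) ->
    exists N, forall n, (N <= n)%N -> I n = I N.

Definition Spec (R : comPzRingType) := {P : set R | is_prime_ideal P}.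
Definition pt (R : comPzRingType) (p : Spec R) : set R := proj1_sig p.

Definition zariski_closed (R : comPzRingType) (S : set (Spec R)) : Prop :=
  exists I : set R, S = [set p | I `<=` pt p].
Definition zariski_open (R : comPzRingType) (S : set (Spec R)) : Prop :=
  zariski_closed (~` S).
Definition zariski_clopen (R : comPzRingType) (S : set (Spec R)) : Prop :=
  zariski_open S /\ zariski_closed S.

Definition specialization_closed (R : comPzRingType) (S : set (Spec R)) : Prop :=
  forall p q : Spec R, S p -> pt p `<=` pt q -> S q.

Definition sp_filtration (R : comPzRingType) (phi : int -> set (Spec R)) : Prop :=
  (forall i, specialization_closed (phi i)) /\ (forall i, phi (i + 1) `<=` phi i).

Definition saturated_pair (R : comPzRingType) (p q : Spec R) : Prop :=
  pt p `<` pt q /\ ~ (exists r : Spec R, pt p `<` pt r /\ pt r `<` pt q).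

Definition weak_cousin (R : comPzRingType) (phi : int -> set (Spec R)) : Prop :=
  forall (j : int) (p q : Spec R), saturated_pair p q -> phi j q -> phi (j - 1) p.

From HB Require Import structures.
From mathcomp Require Import all_boot all_order all_algebra.
From mathcomp Require Import perm boolp classical_sets.
From Stdlib Require List.
Import Order.TTheory GRing.Theory Num.Theory.
Local Open Scope ring_scope.
Local Open Scope classical_set_scope.
Set Implicit Arguments. Unset Strict Implicit. Unset Printing Implicit Defensive.

(* The weak Cousin condition says that going down one step of a saturated chain of
   primes costs one index.  In a Noetherian ring an inclusion of primes [p <= q] is
   refined by a finite saturated chain: a prime minimal over [p + (a)], [a] in [q]
   but not in [p], lies just above [p] by Krull's principal ideal theorem, and the
   ascending chain condition makes the chain finite.  Hence [q \in phi j] forces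
   [p \in phi (j - n)].  Spec R has finitely many minimal primes; taking [j0] below
   the indices at which they enter [phi] gives [phi j <= phi j0] for all [j].  Both
   [phi j0] and the intersection of all [phi i] are then stable under specialization
   and generalization, and such a set is clopen, being, like its complement, a
   finite union of closed sets [V p] with [p] minimal. *)

Section Ideals.
Variable R : comPzRingType.
Implicit Types (I J K p : set R) (a b x y : R).

Lemma ideal0 I : is_ideal I -> I 0.
Proof. by case. Qed.

Lemma idealD I a b : is_ideal I -> I a -> I b -> I (a + b).
Proof. by move=> [_ [H _]]; apply: H. Qed.

Lemma idealMl I r a : is_ideal I -> I a -> I (r * a).
Proof. by move=> [_ [_ H]]; apply: H. Qed.

Lemma idealMr I r a : is_ideal I -> I a -> I (a * r).
Proof. by move=> hI ha; rewrite mulrC; apply: idealMl. Qed.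

Lemma idealN I a : is_ideal I -> I a -> I (- a).
Proof. by move=> hI ha; rewrite -mulN1r; apply: idealMl. Qed.

Lemma idealB I a b : is_ideal I -> I a -> I b -> I (a - b).
Proof. by move=> hI ha hb; apply: idealD => //; apply: idealN. Qed.

Lemma ideal_sum I (T : finType) (P : pred T) (F : T -> R) :
  is_ideal I -> (forall i, P i -> I (F i)) -> I (\sum_(i | P i) F i).
Proof.
by move=> hI hF; elim/big_ind: _ => //; [exact: ideal0 | move=> x y; apply: idealD].
Qed.

Lemma ideal_prod I m (F : 'I_m -> R) i0 : is_ideal I -> I (F i0) -> I (\prod_i F i).
Proof. by move=> hI h; rewrite (bigD1 i0) //=; apply: idealMr. Qed.

Lemma ideal_setT : is_ideal (@setT R).
Proof. by []. Qed.

Lemma ideal_eqT I : is_ideal I -> I 1 -> I = setT.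
Proof.
by move=> hI h1; apply/seteqP; split=> // x _; rewrite -(mulr1 x); apply: idealMl.
Qed.

Lemma ideal_setI I J : is_ideal I -> is_ideal J -> is_ideal (I `&` J).
Proof.
move=> hI hJ; split; last split.
- by split; apply: ideal0.
- by move=> x y [? ?] [? ?]; split; apply: idealD.
- by move=> r x [? ?]; split; apply: idealMl.
Qed.

Lemma prime_is_ideal p : is_prime_ideal p -> is_ideal p.
Proof. by case. Qed.

Lemma prime_notin1 p : is_prime_ideal p -> ~ p 1.
Proof. by case=> _ []. Qed.

Lemma primeM p a b : is_prime_ideal p -> p (a * b) -> p a \/ p b.
Proof. by case=> _ [_ H]; apply: H. Qed.

Lemma prime_notinM p a b : is_prime_ideal p -> ~ p a -> ~ p b -> ~ p (a * b).
Proof. by move=> hp ha hb /(primeM hp) []. Qed.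

Lemma primeX p a n : is_prime_ideal p -> p (a ^+ n) -> p a.
Proof.
move=> hp; elim: n => [|n IH]; first by rewrite expr0 => /(prime_notin1 hp).
by rewrite exprS => /(primeM hp) [] // /IH.
Qed.

Lemma prime_notin_prod p m (F : 'I_m -> R) :
  is_prime_ideal p -> (forall i, ~ p (F i)) -> ~ p (\prod_i F i).
Proof.
move=> hp hF; elim/big_ind: _ => //; first exact: prime_notin1.
by move=> x y; apply: prime_notinM.
Qed.

Definition iadd I J : set R := [set x | exists y z, [/\ I y, J z & x = y + z]].
Definition principal a : set R := [set x | exists r, x = r * a].
Definition colon I a : set R := [set y | I (y * a)].

Lemma iadd_ideal I J : is_ideal I -> is_ideal J -> is_ideal (iadd I J).
Proof.
move=> hI hJ; split; last split.
- by exists 0, 0; split; [apply: ideal0 | apply: ideal0 | rewrite addr0].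
- move=> x y [a [b [ha hb ->]]] [c [d [hc hd ->]]].
  by exists (a + c), (b + d); split; [exact: idealD | exact: idealD | rewrite addrACA].
- move=> r x [a [b [ha hb ->]]].
  by exists (r * a), (r * b); split; [exact: idealMl | exact: idealMl | rewrite mulrDr].
Qed.

Lemma iaddl I J : is_ideal J -> I `<=` iadd I J.
Proof. by move=> hJ x hx; exists x, 0; split => //; [apply: ideal0 | rewrite addr0]. Qed.

Lemma iaddr I J : is_ideal I -> J `<=` iadd I J.
Proof. by move=> hI x hx; exists 0, x; split => //; [apply: ideal0 | rewrite add0r]. Qed.

Lemma iadd_sub I J K : is_ideal K -> I `<=` K -> J `<=` K -> iadd I J `<=` K.
Proof. by move=> hK IK JK x [y [z [hy hz ->]]]; apply: idealD => //; [apply: IK | apply: JK]. Qed.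

Lemma principal_ideal a : is_ideal (principal a).
Proof.
split; last split.
- by exists 0; rewrite mul0r.
- by move=> x y [c ->] [d ->]; exists (c + d); rewrite mulrDl.
- by move=> r x [c ->]; exists (r * c); rewrite mulrA.
Qed.

Lemma principal_gen a : principal a a.
Proof. by exists 1; rewrite mul1r. Qed.

Lemma principal_sub I a : is_ideal I -> I a -> principal a `<=` I.
Proof. by move=> hI ha x [r ->]; apply: idealMl. Qed.

Lemma colon_ideal I a : is_ideal I -> is_ideal (colon I a).
Proof.
move=> hI; split; last split.
- by rewrite /colon /= mul0r; apply: ideal0.
- by move=> x y hx hy; rewrite /colon /= mulrDl; apply: idealD.
- by move=> r x hx; rewrite /colon /= -mulrA; apply: idealMl.
Qed.

End Ideals.
Section Saturation.
Variable R : comPzRingType.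
Implicit Types (I J p : set R) (a x : R).

(* [saturation p I] is the contraction of the extension of [I] to the localization at [p]. *)
Definition saturation p I : set R := [set x | exists u, ~ p u /\ I (u * x)].
Definition saturated p I : Prop := forall u x, ~ p u -> I (u * x) -> I x.

Lemma saturation_ideal p I : is_prime_ideal p -> is_ideal I -> is_ideal (saturation p I).
Proof.
move=> hp hI; split; last split.
- by exists 1; split; [exact: prime_notin1 | rewrite mulr0; exact: ideal0].
- move=> x y [u [hu hx]] [v [hv hy]]; exists (u * v); split.
    exact: prime_notinM.
  have -> : u * v * (x + y) = v * (u * x) + u * (v * y).
    by rewrite mulrDr !mulrA (mulrC u v).
  by apply: idealD => //; apply: idealMl.
- by move=> r x [u [hu hx]]; exists u; split => //; rewrite mulrCA; apply: idealMl.
Qed.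

Lemma sub_saturation p I : is_prime_ideal p -> I `<=` saturation p I.
Proof. by move=> hp x hx; exists 1; split; [exact: prime_notin1 | rewrite mul1r]. Qed.

Lemma saturation_saturated p I : is_prime_ideal p -> saturated p (saturation p I).
Proof.
move=> hp u x hu [v [hv hx]]; exists (v * u); split; first exact: prime_notinM.
by rewrite -mulrA.
Qed.

Lemma saturation_min p I J : saturated p J -> I `<=` J -> saturation p I `<=` J.
Proof. by move=> hJ IJ x [u [hu hx]]; apply: (hJ u) => //; apply: IJ. Qed.

Lemma saturation_mono p I J : I `<=` J -> saturation p I `<=` saturation p J.
Proof. by move=> IJ x [u [hu hx]]; exists u; split => //; apply: IJ. Qed.

Lemma saturated_setT p : saturated p setT.
Proof. by []. Qed.

Lemma saturated_setI p I J : saturated p I -> saturated p J -> saturated p (I `&` J).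
Proof. by move=> hI hJ u x hu [h1 h2]; split; [apply: hI h1 | apply: hJ h2]. Qed.

End Saturation.

Section Generation.
Variable R : comPzRingType.
Implicit Types (A I S : set R).

Definition ideal_gen S : set R := [set x | forall J, is_ideal J -> S `<=` J -> J x].

Lemma ideal_gen_ideal S : is_ideal (ideal_gen S).
Proof.
split; last split.
- by move=> J hJ _; exact: ideal0.
- by move=> x y hx hy J hJ SJ; apply: idealD => //; [apply: hx | apply: hy].
- by move=> r x hx J hJ SJ; apply: idealMl => //; apply: hx.
Qed.

Lemma sub_ideal_gen S : S `<=` ideal_gen S.
Proof. by move=> x hx J _ SJ; apply: SJ. Qed.

Lemma ideal_gen_min S J : is_ideal J -> S `<=` J -> ideal_gen S `<=` J.
Proof. by move=> hJ SJ x hx; apply: hx. Qed.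

Definition prodset I J : set R := [set x | exists a b, [/\ I a, J b & x = a * b]].

Fixpoint ideal_pow I n : set R :=
  if n is n'.+1 then ideal_gen (prodset I (ideal_pow I n')) else setT.

Lemma ideal_pow_ideal I n : is_ideal (ideal_pow I n).
Proof. by case: n => [|n] /=; [exact: ideal_setT | exact: ideal_gen_ideal]. Qed.

Lemma ideal_powS_sub I n : ideal_pow I n.+1 `<=` ideal_pow I n.
Proof.
elim: n => [|n IH] //=; apply: ideal_gen_min; first exact: ideal_gen_ideal.
by move=> x [a [y [ha hy ->]]]; apply: sub_ideal_gen; exists a, y; split => //; apply: IH.
Qed.

Lemma ideal_pow_exp I b n : I b -> ideal_pow I n (b ^+ n).
Proof.
move=> hb; elim: n => [|n IH] //=.
by apply: sub_ideal_gen; exists b, (b ^+ n); split => //; rewrite exprS.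
Qed.

Definition lincomb A m (g : 'I_m -> R) : set R :=
  [set x | exists c : 'I_m -> R, (forall j, A (c j)) /\ x = \sum_j c j * g j].

Lemma lincomb_ideal A m (g : 'I_m -> R) : is_ideal A -> is_ideal (lincomb A g).
Proof.
move=> hA; split; last split.
- exists (fun _ => 0); split => [j|]; first exact: ideal0.
  by rewrite big1 // => j _; rewrite mul0r.
- move=> a b [c1 [h1 ->]] [c2 [h2 ->]]; exists (fun j => c1 j + c2 j); split.
    by move=> j; apply: idealD.
  by rewrite -big_split /=; apply: eq_bigr => j _; rewrite mulrDl.
- move=> r a [c [h ->]]; exists (fun j => r * c j); split.
    by move=> j; apply: idealMl.
  by rewrite mulr_sumr; apply: eq_bigr => j _; rewrite mulrA.
Qed.

Lemma lincomb_gen m (g : 'I_m -> R) j : lincomb setT g (g j).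
Proof.
exists (fun i => if i == j then 1 else 0); split => //.
rewrite (bigD1 j) //= eqxx mul1r big1 ?addr0 // => i /negbTE ->.
by rewrite mul0r.
Qed.

Lemma lincomb_sub A I m (g : 'I_m -> R) :
  is_ideal I -> (forall j, I (g j)) -> lincomb A g `<=` I.
Proof. by move=> hI hg x [c [_ ->]]; apply: ideal_sum => // j _; apply: idealMl. Qed.


Lemma ideal_powS_sub_lincomb I n m (g : 'I_m -> R) :
  is_ideal I -> ideal_pow I n = lincomb setT g -> ideal_pow I n.+1 `<=` lincomb I g.
Proof.
move=> hI eg; apply: ideal_gen_min; first exact: lincomb_ideal.
move=> x [p [y [hp hy ->]]]; have [c [_ ->]] : lincomb setT g y by rewrite -eg.
exists (fun j => p * c j); split; first by move=> j; apply: idealMr.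
by rewrite mulr_sumr; apply: eq_bigr => j _; rewrite mulrA.
Qed.

End Generation.

Definition ord_extend (T : Type) m (g : 'I_m -> T) (x : T) : 'I_m.+1 -> T :=
  fun i => if unlift ord_max i is Some j then g j else x.

Lemma ord_extend_lift (T : Type) m (g : 'I_m -> T) x j :
  ord_extend g x (lift ord_max j) = g j.
Proof. by rewrite /ord_extend liftK. Qed.

Lemma ord_extend_max (T : Type) m (g : 'I_m -> T) x : ord_extend g x ord_max = x.
Proof. by rewrite /ord_extend unlift_none. Qed.

Lemma sum_ord_extend (R : comPzRingType) m (c g : 'I_m -> R) a x :
  \sum_(i < m.+1) ord_extend c a i * ord_extend g x i = \sum_(i < m) c i * g i + a * x.
Proof.
rewrite big_ord_recr /= !ord_extend_max; congr (_ + _); apply: eq_bigr => i _.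
have -> : widen_ord (leqnSn m) i = lift ord_max i.
  by apply: val_inj; rewrite /= /bump leqNgt ltn_ord.
by rewrite !ord_extend_lift.
Qed.

Section Noetherian.
Variables (R : comPzRingType) (noethR : noetherian R).

Lemma noetherian_maximal {F : set R -> Prop} {I0 : set R} :
  is_ideal I0 -> F I0 ->
  exists I, [/\ is_ideal I, F I, I0 `<=` I &
    forall J, is_ideal J -> F J -> I `<=` J -> J `<=` I].
Proof.
move=> hI0 hF0; apply: contrapT => nomax.
pose G I := [/\ is_ideal I, F I & I0 `<=` I].
have step I : exists J, G I -> G J /\ I `<=` J /\ ~ J `<=` I.
  case: (pselect (G I)) => [[hI hF hs]|nG]; last by exists I.
  case: (pselect (exists J, G J /\ I `<=` J /\ ~ J `<=` I)) => [[J hJ]|noJ].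
    by exists J.
  exfalso; apply: nomax; exists I; split => // J hJ hFJ hIJ.
  apply: contrapT => nJI; apply: noJ; exists J.
  by split => //; split => //; apply: subset_trans hIJ.
have [f hf] := choice step.
pose s n := iter n f I0.
have Gs n : G (s n).
  by elim: n => [|n IH]; [split | have [] := hf (s n) IH].
have [M hM] := noethR (fun n => let: And3 h _ _ := Gs n in h)
  (fun n => (hf (s n) (Gs n)).2.1).
apply: (hf (s M) (Gs M)).2.2.
by have -> : f (s M) = s M.+1 by []; rewrite (hM M.+1 (leqnSn M)).
Qed.

(* A maximal finitely generated subideal of [I] must be [I] itself. *)
Lemma noetherian_fingen (I : set R) : is_ideal I ->
  exists m (g : 'I_m -> R), (forall j, I (g j)) /\ I = lincomb setT g.
Proof.
move=> hI.
pose F K := exists m (g : 'I_m -> R), (forall j, I (g j)) /\ K = lincomb setT g.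
have g0 : 'I_0 -> R by case.
have F0 : F (lincomb setT g0) by exists 0%N, g0; split => // -[].
have [K [_ [m [g [hg ->]]] _ Kmax]] :=
  noetherian_maximal (lincomb_ideal g0 (@ideal_setT R)) F0.
exists m, g; split => //; apply/seteqP; split; last exact: lincomb_sub.
move=> x Ix.
have FJ : F (lincomb setT (ord_extend g x)).
  exists m.+1, (ord_extend g x); split => // j.
  by rewrite /ord_extend; case: (unlift ord_max j) => [j1|] //; apply: hg.
have sub : lincomb setT g `<=` lincomb setT (ord_extend g x).
  move=> y [c [_ ->]]; exists (ord_extend c 0); split => //.
  by rewrite sum_ord_extend mul0r addr0.
apply: (Kmax _ (lincomb_ideal _ (@ideal_setT R)) FJ sub).
by rewrite -[x in lincomb _ _ x](ord_extend_max g x); apply: lincomb_gen.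
Qed.

End Noetherian.

Section DeterminantTrick.
Variable R : comPzRingType.

(* Every non-identity permutation moves some index, so its term of the Leibniz
   expansion contains an off-diagonal entry. *)
Lemma det_notin_prime (p : set R) m (M : 'M[R]_m) : is_prime_ideal p ->
  (forall i, ~ p (M i i)) -> (forall i j, i != j -> p (M i j)) -> ~ p (\det M).
Proof.
move=> hp hdiag hoff.
have hpI := prime_is_ideal hp.
pose rest := \sum_(s : 'S_m | s != 1%g) (-1) ^+ s * \prod_i M i (s i).
have -> : \det M = \prod_i M i i + rest.
  rewrite /determinant (bigD1 (1%g : 'S_m)) //= odd_perm1 expr0 mul1r.
  by congr (_ + _); apply: eq_bigr => i _; rewrite perm1.
have prest : p rest.
  apply: ideal_sum => // s hs; apply: idealMl => //.
  have [i hi] : exists i, s i != i.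
    apply: contrapT => fixs; move/negP: hs; apply; apply/eqP/permP => i.
    by rewrite perm1; apply: contrapT => hi; apply: fixs; exists i; apply/eqP.
  by apply: (ideal_prod (i0 := i) hpI); apply: hoff; rewrite eq_sym.
move=> pdet; apply: (prime_notin_prod hp hdiag).
by rewrite -(addrK rest (\prod_i M i i)); apply: idealB.
Qed.

(* Cramer's rule: [adj M * M = det M], so [det M] kills every [g j] modulo [N]. *)
Lemma determinant_trick (p N : set R) m (g u : 'I_m -> R) (c : 'I_m -> 'I_m -> R) :
  is_prime_ideal p -> is_ideal N -> (forall i, ~ p (u i)) -> (forall i j, p (c i j)) ->
  (forall i, N (u i * g i - \sum_j c i j * g j)) ->
  exists2 d, ~ p d & forall j, N (d * g j).
Proof.
move=> hp hN hu hc hrel.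
pose M : 'M[R]_m := \matrix_(i, j) ((if i == j then u i else 0) - c i j).
pose G : 'cV[R]_m := \col_(j < m) g j.
have MG i : (M *m G) i ord0 = u i * g i - \sum_j c i j * g j.
  rewrite !mxE (eq_bigr (fun j => (if i == j then u i * g j else 0) - c i j * g j)).
    rewrite big_split /= sumrN; congr (_ - _).
    rewrite (bigD1 i) //= eqxx big1 ?addr0 // => j.
    by rewrite eq_sym => /negbTE ->.
  by move=> j _; rewrite !mxE mulrBl; case: eqP => _ //; rewrite mul0r.
exists (\det M).
  apply: det_notin_prime => // [i|i j hij]; rewrite mxE.
    rewrite eqxx => hb; apply: (hu i).
    by rewrite -(subrK (c i i) (u i)); apply: idealD => //; apply: prime_is_ideal.
  by rewrite (negbTE hij) sub0r; apply: idealN; [apply: prime_is_ideal | apply: hc].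
move=> j; have <- : (\adj M *m (M *m G)) j ord0 = \det M * g j.
  by rewrite mulmxA mul_adj_mx mul_scalar_mx !mxE.
by rewrite mxE; apply: ideal_sum => // k _; apply: idealMl => //; rewrite MG.
Qed.

End DeterminantTrick.

Section ArtinianLocalization.
Variables (R : comPzRingType) (s : set R) (hs : is_prime_ideal s).
Implicit Types (A B C I J : set R) (h : R).

(* [B/A] is an Artinian module over the localization at [s]. *)
Definition saturated_dcc A B : Prop :=
  forall J : nat -> set R,
  (forall n, [/\ is_ideal (J n), saturated s (J n), A `<=` J n & J n `<=` B]) ->
  (forall n, J n.+1 `<=` J n) -> exists N, forall n, (N <= n)%N -> J n = J N.

Lemma decreasing_chain_le (J : nat -> set R) :
  (forall n, J n.+1 `<=` J n) -> forall n m, (n <= m)%N -> J m `<=` J n.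
Proof.
move=> hJ n m /subnK <-; elim: (m - n)%N => [|k IH]; first by rewrite add0n.
by rewrite addSn; apply: subset_trans (hJ _) IH.
Qed.

Lemma saturated_dcc_trans A B C :
  is_ideal B -> saturated s B -> is_ideal C -> saturated s C -> A `<=` C -> C `<=` B ->
  saturated_dcc A C -> saturated_dcc C B -> saturated_dcc A B.
Proof.
move=> hB sB hC sC AC CB dAC dCB J hJ hdec.
have Jid n : is_ideal (J n) by case: (hJ n).
have [N1 h1] : exists N1, forall n, (N1 <= n)%N -> J n `&` C = J N1 `&` C.
  apply: dAC => [n|n x [? ?]]; last by split => //; apply: hdec.
  have [i1 i2 i3 _] := hJ n; split; first exact: ideal_setI.
  - exact: saturated_setI.
  - by move=> x hx; split; [apply: i3 | apply: AC].
  - by move=> x [].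
pose K n := saturation s (iadd (J n) C).
have [N2 h2] : exists N2, forall n, (N2 <= n)%N -> K n = K N2.
  apply: dCB => n.
    have [i1 i2 i3 i4] := hJ n; split.
    - exact: saturation_ideal (iadd_ideal _ _).
    - exact: saturation_saturated.
    - exact: subset_trans (iaddr (J := C) i1) (sub_saturation hs).
    - exact: saturation_min (iadd_sub hB i4 CB).
  apply: saturation_mono; apply: iadd_sub (iadd_ideal (Jid n) hC) _ (iaddr (J := C) (Jid n)).
  exact: subset_trans (hdec n) (iaddl hC).
exists (maxn N1 N2) => n hn.
have [hN1 hN2] : (N1 <= n)%N /\ (N2 <= n)%N by split; apply: leq_trans hn; rewrite ?leq_maxl ?leq_maxr.
apply/seteqP; split; first exact: decreasing_chain_le.
move=> x hx; have [_ sJn _ _] := hJ n.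
have : K n x by rewrite h2 // -(h2 _ (leq_maxr N1 N2)); apply: sub_saturation => //; apply: iaddl.
case=> u [hu [y [c [hy hc e]]]].
have hcJ : (J n `&` C) c.
  rewrite h1 // -(h1 _ (leq_maxl N1 N2)); split => //.
  have -> : c = u * x - y by rewrite e addrC addKr.
  apply: idealB => //; first exact: idealMl.
  exact: decreasing_chain_le hdec _ _ hn _ hy.
by apply: (sJn u) => //; rewrite e; apply: idealD => //; case: hcJ.
Qed.

(* If [s h] lies in [A], then over the localization [sat (A + (h)) / A] is
   a quotient of the residue field, hence has no proper nonzero submodule. *)
Lemma saturated_between_simple A h J :
  is_ideal A -> saturated s A -> (forall y, s y -> A (y * h)) ->
  is_ideal J -> saturated s J -> A `<=` J -> J `<=` saturation s (iadd A (principal h)) ->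
  J `<=` A \/ saturation s (iadd A (principal h)) `<=` J.
Proof.
move=> hA sA hh hJ sJ AJ Jtop.
case: (pselect (J `<=` A)) => [|nJA]; [by left | right].
have [y [hy nyA]] : exists y, J y /\ ~ A y.
  apply: contrapT => nex; apply: nJA => y hy; apply: contrapT => nyA.
  by apply: nex; exists y.
have [u [hu [a [z [ha [r ->] e]]]]] := Jtop y hy.
have hr : ~ s r.
  by move=> sr; apply: nyA; apply: (sA u) => //; rewrite e; apply: idealD => //; apply: hh.
have hJh : J h.
  apply: (sJ r) => //; have -> : r * h = u * y - a by rewrite e addrC addKr.
  by apply: idealB => //; [apply: idealMl | apply: AJ].
by apply: saturation_min => //; apply: iadd_sub => //; apply: principal_sub.
Qed.

Lemma saturated_dcc_step A h :
  is_ideal A -> saturated s A -> (forall y, s y -> A (y * h)) ->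
  saturated_dcc A (saturation s (iadd A (principal h))).
Proof.
move=> hA sA hh J hJ hdec.
pose top := saturation s (iadd A (principal h)).
have simple n : J n `<=` A \/ top `<=` J n.
  by have [i1 i2 i3 i4] := hJ n; apply: saturated_between_simple.
case: (pselect (exists N, J N `<=` A)) => [[N hN]|nex].
  exists N => n hn; have [_ _ i3 _] := hJ n; have [_ _ j3 _] := hJ N.
  apply/seteqP; split; last exact: subset_trans hN i3.
  exact: subset_trans (subset_trans (decreasing_chain_le hdec hn) hN) j3.
have Jtop m : J m = top.
  have [_ _ _ i4] := hJ m; apply/seteqP; split => //.
  by case: (simple m) => // hm; exfalso; apply: nex; exists m.
by exists 0%N => n _; rewrite !Jtop.
Qed.

Hypothesis noethR : noetherian R.

(* A maximal element among the ideals [colon C h], [h] outside [C], is prime. *)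
Lemma exists_prime_colon C : is_ideal C -> ~ C 1 ->
  exists2 h, ~ C h & is_prime_ideal (colon C h).
Proof.
move=> hC nC1.
pose F Q := exists2 h, ~ C h & Q = colon C h.
have F1 : F (colon C 1) by exists 1.
have [Q [hQ [h nh ->] _ Qmax]] := noetherian_maximal noethR (colon_ideal 1 hC) F1.
exists h => //; split; first exact: colon_ideal.
split; first by rewrite /colon /= mul1r.
move=> x y hxy; case: (pselect (colon C h x)) => [|nx]; [by left | right].
have sub : colon C h `<=` colon C (x * h).
  by move=> z hz; rewrite /colon /= mulrCA; exact: idealMl.
apply: (Qmax _ (colon_ideal (x * h) hC) _ sub); first by exists (x * h).
by rewrite /colon /= mulrA (mulrC y x).
Qed.

(* A maximal counterexample [C] is extended by one simple step [sat (C + (h))]. *)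
Lemma saturated_dcc_setT T :
  is_ideal T -> saturated s T ->
  (forall C, is_ideal C -> saturated s C -> T `<=` C -> ~ C 1 ->
      exists2 h, ~ C h & forall y, s y -> C (y * h)) ->
  saturated_dcc T setT.
Proof.
move=> hT sT simple; apply: contrapT => nd.
pose F C := [/\ saturated s C, T `<=` C & ~ saturated_dcc C setT].
have [C [hC [sC TC ndC] _ Cmax]] :=
  noetherian_maximal noethR (F := F) hT (And3 sT (@subset_refl _ T) nd).
apply: ndC; case: (pselect (C 1)) => [C1|nC1].
  move=> J hJ _; exists 0%N => n _.
  have JT m : J m = setT by have [i1 _ i3 _] := hJ m; apply: ideal_eqT => //; apply: i3.
  by rewrite !JT.
have [h nh hh] := simple C hC sC TC nC1.
pose C' := saturation s (iadd C (principal h)).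
have hC' : is_ideal C' := saturation_ideal hs (iadd_ideal hC (principal_ideal h)).
have sC' : saturated s C' := saturation_saturated (I := iadd C (principal h)) hs.
have CC' : C `<=` C'.
  exact: subset_trans (iaddl (principal_ideal h)) (sub_saturation hs).
case: (pselect (saturated_dcc C' setT)) => [d'|nd'].
  apply: (saturated_dcc_trans (@ideal_setT R) (@saturated_setT R s) hC' sC' CC') => //.
  exact: saturated_dcc_step.
exfalso; apply: nh; apply: (Cmax C' hC' (And3 sC' (subset_trans TC CC') nd') CC').
by apply: sub_saturation => //; apply: iaddr => //; apply: principal_gen.
Qed.

End ArtinianLocalization.

Section KrullPrincipalIdeal.
Variables (R : comPzRingType) (noethR : noetherian R).
Variables (r P s : set R) (a : R).
Hypotheses (hr : is_prime_ideal r) (hP : is_prime_ideal P) (hs : is_prime_ideal s).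
Hypotheses (rP : r `<=` P) (Ps : P `<=` s) (sa : s a) (nPa : ~ P a).
Hypothesis smin :
  forall t, is_prime_ideal t -> r `<=` t -> t a -> t `<=` s -> s `<=` t.

Let hrI := prime_is_ideal hr.

(* [Q n] is the [n]-th symbolic power of [P] modulo [r]. *)
Let Q n := saturation P (iadd (ideal_pow P n) r).
Let J n := saturation s (iadd (Q n) (principal a)).

Let Q_ideal n : is_ideal (Q n).
Proof. exact: saturation_ideal hP (iadd_ideal (ideal_pow_ideal P n) hrI). Qed.

Let Q_saturated n : saturated P (Q n).
Proof. exact: saturation_saturated. Qed.

Let r_sub_Q n : r `<=` Q n.
Proof. exact: subset_trans (iaddr (ideal_pow_ideal P n)) (sub_saturation hP). Qed.

Let Q_decr n : Q n.+1 `<=` Q n.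
Proof.
apply: saturation_mono; apply: iadd_sub (iadd_ideal (ideal_pow_ideal P n) hrI) _ _.
  exact: subset_trans (@ideal_powS_sub _ P n) (iaddl hrI).
exact: iaddr (ideal_pow_ideal P n).
Qed.

(* [s] is minimal over [r + (a)], so [R_s / (r + (a))] is Artinian. *)
Let J_stationary : exists M, J M.+1 = J M.
Proof.
pose T := saturation s (iadd r (principal a)).
have dT : saturated_dcc s T setT.
  apply: saturated_dcc_setT => //.
  - exact: saturation_ideal hs (iadd_ideal hrI (principal_ideal a)).
  - exact: saturation_saturated.
  move=> C hC sC TC nC1; have [h nh hcolon] := exists_prime_colon noethR hC nC1.
  have TCh y : T y -> C (y * h) by move=> Ty; apply: idealMr => //; apply: TC.
  exists h => //; apply: smin => //.
  - by move=> y ry; apply: TCh; apply: sub_saturation => //; apply: iaddl (principal_ideal a) _ _.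
  - by apply: TCh; apply: sub_saturation => //; apply: iaddr => //; apply: principal_gen.
  - by move=> y hy; apply: contrapT => nsy; apply: nh; apply: (sC y).
have [M hM] : exists M, forall n, (M <= n)%N -> J n = J M.
  apply: dT => n; last first.
    apply: saturation_mono; apply: iadd_sub (iadd_ideal (Q_ideal n) (principal_ideal a)) _ _.
      exact: subset_trans (@Q_decr n) (iaddl (principal_ideal a)).
    exact: iaddr (Q_ideal n).
  split => //.
  - exact: saturation_ideal hs (iadd_ideal (Q_ideal n) (principal_ideal a)).
  - exact: saturation_saturated.
  - apply: saturation_mono; apply: iadd_sub (iadd_ideal (Q_ideal n) (principal_ideal a)) _ _.
      exact: subset_trans (@r_sub_Q n) (iaddl (principal_ideal a)).
    exact: iaddr (Q_ideal n).
by exists M; apply: hM.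
Qed.

(* Nakayama over [R_s]: [Q M = Q (M+1) + a Q M] up to saturation, and [a] lies in [s]. *)
Let Q_stationary M : J M.+1 = J M -> Q M `<=` Q M.+1.
Proof.
move=> eJ; have [m [g [hg eg]]] := noetherian_fingen noethR (Q_ideal M).
have decomp i : exists t : R * (R * R),
    [/\ ~ s t.1, Q M.+1 t.2.1 & t.1 * g i = t.2.1 + t.2.2 * a].
  have : J M.+1 (g i) by rewrite eJ; apply: sub_saturation => //; apply: (iaddl (principal_ideal a)).
  by case=> u [hu [q [z [hq [y ->] e]]]]; exists (u, (q, y)).
have [t ht] := choice decomp.
have coef i : exists e : 'I_m -> R, (t i).2.2 = \sum_j e j * g j.
  have [h1 h2 h3] := ht i.
  suff : Q M (t i).2.2 by rewrite eg => -[e [_ ->]]; exists e.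
  apply: (Q_saturated nPa); rewrite mulrC.
  have -> : (t i).2.2 * a = (t i).1 * g i - (t i).2.1 by rewrite h3 addrC addKr.
  by apply: idealB => //; [apply: idealMl | apply: Q_decr].
have [e he] := choice coef.
have [d nd hd] : exists2 d, ~ s d & forall j, Q M.+1 (d * g j).
  apply: (determinant_trick (u := fun i => (t i).1) (c := fun i j => a * e i j) hs (Q_ideal _)).
  - by move=> i; case: (ht i).
  - by move=> i j; apply: idealMr (prime_is_ideal hs) _.
  move=> i; have [_ h2 h3] := ht i.
  have -> : \sum_j a * e i j * g j = (t i).2.2 * a.
    by rewrite (he i) mulr_suml; apply: eq_bigr => j _; rewrite [RHS]mulrC mulrA.
  by rewrite h3 addrK.
move=> x; rewrite {1}eg => -[c [_ ->]]; apply: (Q_saturated (u := d)); first by move/Ps.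
by rewrite mulr_sumr; apply: ideal_sum => // j _; rewrite mulrCA; apply: idealMl.
Qed.

(* Nakayama over [R_P]: [P^M <= P P^M + r] after localizing at [P], so [P^M] dies in [(R/r)_P]. *)
Let ideal_pow_annihilated M : Q M `<=` Q M.+1 ->
  exists2 d, ~ P d & forall x, ideal_pow P M x -> r (d * x).
Proof.
move=> QQ; have [m [g [hg eg]]] := noetherian_fingen noethR (ideal_pow_ideal P M).
have decomp i : exists t : R * (R * R),
    [/\ ~ P t.1, lincomb P g t.2.1, r t.2.2 & t.1 * g i = t.2.1 + t.2.2].
  have : Q M.+1 (g i) by apply: QQ; apply: sub_saturation => //; apply: (iaddl hrI).
  case=> u [hu [z [w [hz hw e]]]]; exists (u, (z, w)); split => //.
  exact: ideal_powS_sub_lincomb (prime_is_ideal hP) eg _ hz.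
have [t ht] := choice decomp.
have coef i : exists c : 'I_m -> R, (forall j, P (c j)) /\ (t i).2.1 = \sum_j c j * g j.
  by have [_ [c hc] _ _] := ht i; exists c.
have [c hc] := choice coef.
have [d nd hd] : exists2 d, ~ P d & forall j, r (d * g j).
  apply: (determinant_trick (u := fun i => (t i).1) (c := c) hP hrI) => [i|i j|i].
  - by case: (ht i).
  - exact: (proj1 (hc i)).
  - by have [_ _ h3 h4] := ht i; rewrite -(proj2 (hc i)) h4 addrC addKr.
exists d => // x; rewrite eg => -[e [_ ->]].
by rewrite mulr_sumr; apply: ideal_sum => // j _; rewrite mulrCA; apply: idealMl.
Qed.

Lemma krull_principal_ideal : P `<=` r.
Proof.
have [M /Q_stationary /ideal_pow_annihilated [d nd hd]] := J_stationary.
move=> b Pb; have /(primeM hr) [/rP //|/(primeX hr) //] := hd _ (ideal_pow_exp M Pb).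
Qed.

End KrullPrincipalIdeal.

Section MinimalPrimes.
Variables (R : comPzRingType) (noethR : noetherian R).
Implicit Types (I K p q : set R).

Definition prime_cover I (l : seq (set R)) : Prop :=
  (forall p, List.In p l -> is_prime_ideal p /\ I `<=` p) /\
  (forall q, is_prime_ideal q -> I `<=` q -> exists p, List.In p l /\ p `<=` q).

Lemma prime_cover_cat I a b la lb :
  prime_cover (iadd I (principal a)) la -> prime_cover (iadd I (principal b)) lb ->
  is_ideal I -> I (a * b) -> prime_cover I (la ++ lb).
Proof.
move=> [ca1 ca2] [cb1 cb2] hI Iab; split.
  move=> p /(List.in_app_or la lb p) [/ca1|/cb1] [hp sp]; split => //.
    exact: subset_trans (iaddl (principal_ideal a)) sp.
  exact: subset_trans (iaddl (principal_ideal b)) sp.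
move=> q hq Iq.
have over c : q c -> iadd I (principal c) `<=` q.
  by move=> qc; apply: iadd_sub => //; [apply: prime_is_ideal | apply: principal_sub => //; apply: prime_is_ideal].
have [/over qa|/over qb] := primeM hq (Iq _ Iab).
  by have [p [pl pq]] := ca2 q hq qa; exists p; split => //; apply: List.in_or_app; left.
by have [p [pl pq]] := cb2 q hq qb; exists p; split => //; apply: List.in_or_app; right.
Qed.

(* Noetherian induction: a maximal ideal without a finite prime cover is prime. *)
Lemma exists_prime_cover I : is_ideal I -> exists l, prime_cover I l.
Proof.
move=> hI; apply: contrapT => nI.
pose F K := ~ exists l, prime_cover K l.
have [K [hK FK _ Kmax]] := noetherian_maximal noethR (F := F) hI nI.
apply: FK; case: (pselect (K 1)) => [K1|nK1].
  by exists nil; split => // q hq Kq; exfalso; apply: (prime_notin1 hq); apply: Kq.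
case: (pselect (is_prime_ideal K)) => [pK|npK].
  by exists [:: K]; split => [p [<-|//]|q hq Kq]; [split | exists K; split => //; left].
have [a [b [Kab na nb]]] : exists a b, [/\ K (a * b), ~ K a & ~ K b].
  apply: contrapT => nex; apply: npK; split => //; split => // a b Kab.
  case: (pselect (K a)) => [|na]; first by left.
  case: (pselect (K b)) => [|nb]; first by right.
  by exfalso; apply: nex; exists a, b.
have ext c : ~ K c -> exists l, prime_cover (iadd K (principal c)) l.
  move=> nc; apply: contrapT => nl; apply: nc.
  apply: (Kmax _ (iadd_ideal hK (principal_ideal c)) nl (iaddl (principal_ideal c))).
  by apply: iaddr => //; apply: principal_gen.
have [la ha] := ext a na; have [lb hb] := ext b nb.
by exists (la ++ lb); apply: prime_cover_cat ha hb hK Kab.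
Qed.

End MinimalPrimes.

Lemma list_minimal (T : Type) (l : seq (set T)) x : List.In x l ->
  exists y, [/\ List.In y l, y `<=` x & forall z, List.In z l -> z `<=` y -> y `<=` z].
Proof.
elim: l x => [//|h l IH] x.
have minh : exists y, [/\ List.In y (h :: l), y `<=` h &
    forall z, List.In z (h :: l) -> z `<=` y -> y `<=` z].
  case: (pselect (exists z, List.In z l /\ z `<=` h)) => [[z [zl zh]]|nz].
    have [y [yl yz ymin]] := IH z zl.
    exists y; split; [by right | exact: subset_trans yz zh |].
    by move=> w [<-|wl] wy; [exact: subset_trans yz zh | exact: ymin].
  exists h; split => [|//|w [<-|wl] wh //]; first by left.
  by exfalso; apply: nz; exists w.
move=> [<-|xl]; first exact: minh.
have [y [yl yx ymin]] := IH x xl.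
case: (pselect (h `<=` y)) => [hy|nhy].
  have [y' [y'l y'h y'min]] := minh.
  by exists y'; split => //; apply: subset_trans y'h (subset_trans hy yx).
exists y; split => //; first by right.
by move=> z [<-|zl] zy; [exfalso; apply: nhy | exact: ymin].
Qed.

(* A prime [s] minimal over [r + (a)] has nothing strictly between itself and [r]
   by Krull's principal ideal theorem. *)
Lemma exists_saturated_step (R : comPzRingType) (r q : set R) :
  noetherian R -> is_prime_ideal r -> is_prime_ideal q -> r `<` q ->
  exists s, [/\ is_prime_ideal s, r `<` s, s `<=` q &
    forall t, is_prime_ideal t -> r `<` t -> t `<=` s -> s `<=` t].
Proof.
move=> noethR hr hq [rq nqr].
have [a qa nra] : exists2 a, q a & ~ r a.
  apply: contrapT => nex; apply: nqr => a qa; apply: contrapT => nra.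
  by apply: nex; exists a.
have hrI := prime_is_ideal hr.
pose I := iadd r (principal a).
have over t : is_prime_ideal t -> r `<=` t -> t a -> I `<=` t.
  move=> ht rt ta; apply: iadd_sub => //; first exact: prime_is_ideal.
  by apply: principal_sub => //; apply: prime_is_ideal.
have [l [c1 c2]] := exists_prime_cover noethR (iadd_ideal hrI (principal_ideal a)).
have [p [pl pq]] := c2 q hq (over q hq rq qa).
have [s [sl sp smin]] := list_minimal pl.
have [hs Is] := c1 s sl.
have sa : s a by apply: Is; apply: iaddr => //; apply: principal_gen.
have rs : r `<=` s := subset_trans (iaddl (principal_ideal a)) Is.
have sminI t : is_prime_ideal t -> r `<=` t -> t a -> t `<=` s -> s `<=` t.
  move=> ht rt ta ts; have [p' [p'l p't]] := c2 t ht (over t ht rt ta).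
  exact: subset_trans (smin p' p'l (subset_trans p't ts)) p't.
exists s; split => //; first by split => // sr; apply: nra; apply: sr.
  exact: subset_trans sp pq.
move=> t ht [rt ntr] ts; case: (pselect (t a)) => [ta|nta]; first exact: sminI.
by exfalso; apply: ntr; apply: (krull_principal_ideal noethR hr ht hs rt ts sa nta sminI).
Qed.

Section Zariski.
Variables (R : comPzRingType) (noethR : noetherian R).

Definition generalization_closed (S : set (Spec R)) : Prop :=
  forall p q : Spec R, S q -> pt p `<=` pt q -> S p.

Lemma spec_prime_cover : exists l : seq (set R),
  (forall p, List.In p l -> is_prime_ideal p) /\
  forall q : Spec R, exists p, List.In p l /\ p `<=` pt q.
Proof.
have [l [hl cov]] := exists_prime_cover noethR (principal_ideal (0 : R)).
exists l; split => [p /hl [] //|q].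
apply: cov; first exact: (proj2_sig q).
by apply: principal_sub; [apply: prime_is_ideal (proj2_sig q) | apply: ideal0 (prime_is_ideal (proj2_sig q))].
Qed.

Lemma exists_notin_prime (q : set R) (l : seq (set R)) (Sel : set R -> Prop) :
  is_prime_ideal q -> (forall p, List.In p l -> is_prime_ideal p) ->
  (forall p, List.In p l -> Sel p -> ~ p `<=` q) ->
  exists2 x, ~ q x & forall p, List.In p l -> Sel p -> p x.
Proof.
move=> hq; elim: l => [|h l IH] hl hn; first by exists 1 => //; exact: prime_notin1.
have [x nqx hx] := IH (fun p pl => hl p (or_intror pl)) (fun p pl => hn p (or_intror pl)).
have hhI := prime_is_ideal (hl h (or_introl erefl)).
case: (pselect (Sel h)) => [sh|nsh]; last first.
  by exists x => // p [<-|pl] sp; [exfalso | exact: hx].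
have [y hy nqy] : exists2 y, h y & ~ q y.
  apply: contrapT => nex; apply: (hn h (or_introl erefl) sh) => y hy.
  by apply: contrapT => nqy; apply: nex; exists y.
exists (y * x); first exact: prime_notinM.
move=> p [<-|pl] sp; first exact: idealMr.
by apply: idealMl; [exact: prime_is_ideal (hl p (or_intror pl)) | exact: hx].
Qed.

(* The finite union of the closed sets [V p] over the selected primes is [V] of their intersection. *)
Lemma zariski_closed_finite_union (l : seq (set R)) (Sel : set R -> Prop) :
  (forall p, List.In p l -> is_prime_ideal p) ->
  zariski_closed [set q : Spec R | exists p, [/\ List.In p l, Sel p & p `<=` pt q]].
Proof.
move=> hl; exists [set x | forall p, List.In p l -> Sel p -> p x].
apply/seteqP; split => q; first by move=> [p [pl sp pq]] x hx; apply: pq; exact: hx.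
move=> Iq; apply: contrapT => nex.
have [x nqx hx] := exists_notin_prime (Sel := Sel) (proj2_sig q) hl
  (fun p pl sp pq => nex (ex_intro _ p (And3 pl sp pq))).
by apply: nqx; apply: Iq.
Qed.

(* [S] and its complement are the unions of [V p] over the minimal primes [p] they contain. *)
Lemma zariski_clopen_stable (S : set (Spec R)) :
  specialization_closed S -> generalization_closed S -> zariski_clopen S.
Proof.
move=> hsp hgen; have [l [hl cov]] := spec_prime_cover.
pose inS (p : set R) := exists hp : is_prime_ideal p, S (exist _ p hp).
split; rewrite /zariski_open.
- have -> : ~` S = [set q : Spec R | exists p, [/\ List.In p l, ~ inS p & p `<=` pt q]].
    apply/seteqP; split => q.
      move=> nSq; have [p [pl pq]] := cov q; exists p; split => //.
      by move=> [hp Sp]; apply: nSq; apply: hsp Sp _.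
    by move=> [p [pl nps pq]] Sq; apply: nps; exists (hl p pl); exact: hgen Sq _.
  exact: zariski_closed_finite_union.
- have -> : S = [set q : Spec R | exists p, [/\ List.In p l, inS p & p `<=` pt q]].
    apply/seteqP; split => q.
      move=> Sq; have [p [pl pq]] := cov q; exists p; split => //.
      by exists (hl p pl); apply: hgen Sq _.
    by move=> [p [pl [hp Sp] pq]]; apply: hsp Sp _.
  exact: zariski_closed_finite_union.
Qed.

End Zariski.

Section Filtration.
Variables (R : comPzRingType) (phi : int -> set (Spec R)).
Hypothesis hphi : sp_filtration phi.

Lemma sp_filtration_anti (i j : int) : i <= j -> phi j `<=` phi i.
Proof.
have [_ hdec] := hphi; move=> hij.
have [n ->] : exists n : nat, j = i + n%:Z.
  by exists `|j - i|%N; rewrite gez0_abs ?subr_ge0 // addrCA subrr addr0.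
elim: n => [|n IH]; first by rewrite addr0.
have -> : i + n.+1%:Z = (i + n%:Z) + 1 by rewrite -addn1 PoszD addrA.
exact: subset_trans (hdec _) IH.
Qed.

Lemma filtration_common_index (l : seq (set R)) :
  exists j0, forall p (hp : is_prime_ideal p), List.In p l ->
    (exists j, phi j (exist _ p hp)) -> phi j0 (exist _ p hp).
Proof.
elim: l => [|h l [j1 IH]]; first by exists 0.
case: (pselect (exists hh : is_prime_ideal h, exists j, phi j (exist _ h hh)))
  => [[hh [jh Hh]]|nh]; last first.
  exists j1 => p hp [ep|pl] ex; last exact: IH.
  by exfalso; apply: nh; move: hp ex; rewrite -ep => hp ex; exists hp.
exists (Order.min jh j1) => p hp [ep|pl] ex.
  move: hp ex; rewrite -ep => hp _; rewrite (Prop_irrelevance hp hh).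
  by apply: sp_filtration_anti Hh; rewrite ge_min lexx.
by apply: sp_filtration_anti (IH p hp pl ex); rewrite ge_min lexx orbT.
Qed.

Hypotheses (noethR : noetherian R) (wc : weak_cousin phi).

(* Along a saturated chain from [p] up to [q] each step costs one index; the chain
   is built downwards from [q] by taking a maximal prime not yet reached. *)
Lemma weak_cousin_shift (p q : Spec R) : pt p `<=` pt q ->
  exists n : nat, forall j, phi j q -> phi (j - n%:Z) p.
Proof.
case: p q => [p hp] [q hq] /= pq.
pose G (c : set R) := forall hc : is_prime_ideal c,
  exists n : nat, forall j, phi j (exist _ q hq) -> phi (j - n%:Z) (exist _ c hc).
apply: (@contrapT (G p)) => // nGp.
pose F (c : set R) := [/\ is_prime_ideal c, c `<=` q & ~ G c].
have [c [_ [hc cq nGc] _ cmax]] :=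
  noetherian_maximal noethR (F := F) (prime_is_ideal hp) (And3 hp pq nGp).
apply: nGc; case: (pselect (q `<=` c)) => [qc|nqc].
  have ec : c = q by apply/seteqP.
  move: hc cq cmax; rewrite ec => hc _ _ hc'; exists 0%N => j.
  by rewrite subr0 (Prop_irrelevance hc' hq).
have [s [hs cs sq ssat]] := exists_saturated_step noethR hc hq (conj cq nqc).
have [n hn] : exists n : nat, forall j, phi j (exist _ q hq) -> phi (j - n%:Z) (exist _ s hs).
  suff Gs : G s by apply: Gs.
  apply: contrapT => nGs; case: cs => cs ncs; apply: ncs.
  exact: cmax s (prime_is_ideal hs) (And3 hs sq nGs) cs.
move=> hc'; exists n.+1 => j Hj.
have -> : j - n.+1%:Z = (j - n%:Z) - 1 by rewrite -addn1 PoszD opprD addrA.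
apply: (@wc (j - n%:Z) (exist _ c hc') (exist _ s hs)); last exact: hn.
by split => //= -[[t ht] /= [ct [ts nst]]]; apply: nst; apply: ssat.
Qed.

End Filtration.

Theorem proposition4p9 (R : comPzRingType) (phi : int -> set (Spec R)) :
  noetherian R -> sp_filtration phi -> weak_cousin phi ->
  (exists j0 : int,
      (forall j : int, j <= j0 -> phi j = phi j0) /\ zariski_clopen (phi j0)) /\
  zariski_clopen (\bigcap_(i in [set: int]) phi i).
Proof.
move=> noethR hphi wc; have [hsp _] := hphi.
have shift := weak_cousin_shift noethR wc.
split; last first.
  apply: (zariski_clopen_stable noethR) => // [p q Sp pq i _|p q Sq pq i _].
    exact: hsp i p q (Sp i I) pq.
  by have [n hn] := shift p q pq; have := hn (i + n%:Z) (Sq _ I); rewrite addrK.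
have [l [hl cov]] := spec_prime_cover noethR.
have [j0 hj0] := filtration_common_index hphi l.
have phi_sub j : phi j `<=` phi j0.
  move=> q Hq; have [p [pl pq]] := cov q.
  have [n hn] := shift (exist _ p (hl p pl)) q pq.
  apply: (hsp j0 (exist _ p (hl p pl)) q) => //.
  by apply: hj0 => //; exists (j - n%:Z); exact: hn.
exists j0; split.
  by move=> j hj; apply/seteqP; split; [exact: phi_sub | exact: sp_filtration_anti].
apply: (zariski_clopen_stable noethR (hsp j0)).
by move=> p q Sq pq; have [n hn] := shift p q pq; exact: phi_sub _ _ (hn _ Sq).
Qed.
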